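(* Let $q$ be a prime power, let $d \ge 1$ be a fixed integer, and let $f:\mathbb{F}_q^n \rightarrow \mathbb{F}_q$ be an unknown multilinear polynomial of degree $d$ over $\mathbb{F}_q$. Then any quantum query algorithm which learns $f$ with bounded error (i.e. outputs $f$ with probability at least a fixed constant, e.g. $2/3$, for every such $f$) must make $\Omega(n^{d-1})$ queries to $f$.
   Context: $\mathbb{F}_q$ denotes the finite field with $q$ elements. A function $f:\mathbb{F}_q^n \rightarrow \mathbb{F}_q$ is a multilinear polynomial of degree $d$ if it can be written as $f(x) = \sum_{S \subseteq [n],|S|\le d} \alpha_S \prod_{i \in S} x_i$ for some coefficients $\alpha_S \in \mathbb{F}_q$, where $[n]=\{1,\dots,n\}$ and the empty product equals $1$. In the quantum query model, the algorithm accesses $f$ only via the unitary oracle $O_f \ket{x}\ket{y} = \ket{x}\ket{y + f(x)}$ for $x \in \mathbb{F}_q^n$, $y \in \mathbb{F}_q$ (interleaved with arbitrary oracle-independent unitaries and a final measurement); the number of queries is the number of applications of $O_f$. To learn $f$ means to output (a description of) $f$, i.e. all its coefficients $\alpha_S$. *)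

From mathcomp Require Import all_boot all_order all_algebra all_field.
From mathcomp Require Import complex.
From mathcomp Require Import Rstruct.
Set Implicit Arguments. Unset Strict Implicit. Unset Printing Implicit Defensive.
Import Order.TTheory GRing.Theory Num.Theory.
Local Open Scope ring_scope.

Definition Rr : rcfType := Rdefinitions.R.
Definition C : numClosedFieldType := complex Rr.

(* coefficient vectors (alpha_S)_{S subseteq [n]} *)
Definition coeffs (F : finFieldType) (n : nat) := {ffun {set 'I_n} -> F}.

Definition deg_le (F : finFieldType) (n d : nat) (a : coeffs F n) : Prop :=
  forall S : {set 'I_n}, (d < #|S|)%N -> a S = 0.

Definition mlpoly_eval (F : finFieldType) (n : nat) (a : coeffs F n)
  (x : {ffun 'I_n -> F}) : F :=
  \sum_(S : {set 'I_n}) a S * \prod_(i in S) x i.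

(* computational basis: query register x in F^n, answer register y in F,
   workspace register w in an arbitrary finite set W *)
Definition basis (F : finFieldType) (n : nat) (W : finType) : finType :=
  ({ffun 'I_n -> F} * F * W)%type.

Definition op (B : finType) := B -> B -> C.
Definition qstate (B : finType) := B -> C.

Definition op_app (B : finType) (U : op B) (v : qstate B) : qstate B :=
  fun b => \sum_(b' : B) U b b' * v b'.

Definition unitary (B : finType) (U : op B) : Prop :=
  forall b b' : B, \sum_(k : B) (U k b)^* * U k b' = (b == b')%:R.

Definition ket (B : finType) (b0 : B) : qstate B := fun b => (b == b0)%:R.

(* O_f |x,y,w> = |x, y + f(x), w>, hence (O_f v)(x,y,w) = v(x, y - f(x), w) *)
Definition oracle (F : finFieldType) (n : nat) (W : finType)
  (f : {ffun 'I_n -> F} -> F) (v : qstate (basis F n W)) : qstate (basis F n W) :=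
  fun b => let: (x, y, w) := b in v (x, y - f x, w).

(* state after U_k O_f U_{k-1} ... O_f U_0 applied to v0 (k oracle calls) *)
Fixpoint run (F : finFieldType) (n : nat) (W : finType)
  (U : nat -> op (basis F n W)) (v0 : qstate (basis F n W))
  (f : {ffun 'I_n -> F} -> F) (k : nat) : qstate (basis F n W) :=
  match k with
  | 0 => op_app (U 0%N) v0
  | k'.+1 => op_app (U k) (oracle f (run U v0 f k'))
  end.

Definition success_prob (B : finType) (A : eqType) (out : B -> A) (a : A)
  (psi : qstate B) : C :=
  \sum_(b : B | out b == a) `|psi b| ^+ 2.

From mathcomp Require Import all_boot all_order all_algebra all_field.
From mathcomp Require Import complex Rstruct sesquilinear spectral.
From mathcomp Require Import ring zify.
From Stdlib Require Import Lia.
Import Order.TTheory GRing.Theory Num.Theory.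
Set Implicit Arguments. Unset Strict Implicit. Unset Printing Implicit Defensive.
Local Open Scope ring_scope.

(* Each oracle call O_f = \sum_(x, z) [f x = z] B_(x, z) is a combination of
   operators B_(x, z) that do not depend on f, so after T queries the final
   state of the algorithm lies, for every f, in one fixed subspace V of
   dimension at most (q ^ (n + 1)) ^ T.  Writing s b for the squared norm of
   the projection of the basis vector b onto V, every unit vector of V has
   |psi b|^2 <= s b, and \sum_b s b = dim V; hence the success probabilities
   of all possible outputs add up to at most dim V.  Since there are
   q ^ #{S : |S| <= d} polynomials of degree d, each learned with probability
   at least 2/3, we get #{S : |S| <= d} <= (n + 1) T, while
   'C(n, d) >= n ^ d / (2 ^ d d!). *)

Section RowSpace.
Variable K : numClosedFieldType.

Lemma dotmx_sqnorm n (u : 'rV[K]_n) : dotmx u u = \sum_j `|u 0 j| ^+ 2.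
Proof. by rewrite dotmxE mxE; apply: eq_bigr => j _; rewrite !mxE normCK. Qed.

Lemma rowspace_mass_bound m n (A : 'M[K]_(m, n)) :
  exists2 s : 'I_n -> K, (forall j, 0 <= s j) /\ \sum_j s j = (\rank A)%:R &
    forall v : 'rV_n, (v <= A)%MS -> forall j, `|v 0 j| ^+ 2 <= dotmx v v * s j.
Proof.
pose Q := schmidt (row_base A).
have Qu : Q \is unitarymx by apply: schmidt_unitarymx; exact: rank_leq_col.
exists (fun j => \sum_i `|Q i j| ^+ 2); first split.
- by move=> j; apply: sumr_ge0 => i _; apply: exprn_ge0.
- rewrite exchange_big /= (eq_bigr (fun=> 1)) => [|i _].
    by rewrite sumr_const card_ord.
  have /row_unitarymxP/(_ i i) := Qu.
  rewrite eqxx mulr1n dotmx_sqnorm => <-; by apply: eq_bigr => j _; rewrite mxE.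
move=> v vA j.
have /submxP[x ->] : (v <= Q)%MS.
  by rewrite (submx_trans vA) // (submx_trans _ (schmidt_sub _)) // eq_row_base.
pose w := \row_i (Q i j)^*.
have -> : (x *m Q) 0 j = dotmx x w.
  by rewrite dotmxE !mxE; apply: eq_bigr => i _; rewrite !mxE conjCK.
have -> : dotmx (x *m Q) (x *m Q) = dotmx x x.
  by rewrite !dotmxE trmx_mul map_mxM mulmxA mulmxtVK.
have -> : \sum_i `|Q i j| ^+ 2 = dotmx w w.
  by rewrite dotmx_sqnorm; apply: eq_bigr => i _; rewrite mxE norm_conjC.
exact: (leif_le (CauchySchwarz _ _ _)).
Qed.
End RowSpace.

Definition sqnorm (B : finType) (v : qstate B) : C := \sum_b `|v b| ^+ 2.

Definition spanned_by (B J : finType) (c : J -> qstate B) (v : qstate B) :=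
  exists lam : J -> C, forall b, v b = \sum_j lam j * c j b.

Lemma sum_enum_val (T : finType) (F : T -> C) :
  \sum_t F t = \sum_(i < #|T|) F (enum_val i).
Proof. by rewrite -big_enum_val. Qed.

Lemma span_mass_bound (B J : finType) (c : J -> qstate B) :
  exists2 s : B -> C, (forall b, 0 <= s b) /\ \sum_b s b <= #|J|%:R &
    forall v, spanned_by c v -> forall b, `|v b| ^+ 2 <= sqnorm v * s b.
Proof.
pose vec (v : qstate B) : 'rV[C]_#|B| := \row_i v (enum_val i).
pose A := \matrix_(k < #|J|) vec (c (enum_val k)).
have [s [s_ge0 sum_s] s_bound] := rowspace_mass_bound A.
exists (fun b => s (enum_rank b)); first split.
- by move=> b; apply: s_ge0.
- rewrite sum_enum_val (eq_bigr s) => [|i _]; last by rewrite enum_valK.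
  by rewrite sum_s ler_nat rank_leq_row.
move=> v [lam v_lam] b.
have vA : (vec v <= A)%MS.
  suff -> : vec v = \row_k lam (enum_val k) *m A by apply: submxMl.
  apply/rowP => i; rewrite !mxE v_lam sum_enum_val.
  by apply: eq_bigr => k _; rewrite !mxE.
have -> : sqnorm v = dotmx (vec v) (vec v).
  by rewrite dotmx_sqnorm /sqnorm sum_enum_val; apply: eq_bigr => i _; rewrite mxE.
by have := s_bound _ vA (enum_rank b); rewrite mxE enum_rankK.
Qed.

Lemma sum_delta (I : finType) (i0 : I) (F : I -> C) :
  \sum_i (i == i0)%:R * F i = F i0.
Proof.
rewrite (eq_bigr (fun i => if i == i0 then F i else 0)) => [|i _].
  by rewrite -big_mkcond big_pred1_eq.
by case: eqP; rewrite ?mul1r ?mul0r.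
Qed.

Lemma sum_basis (F : finFieldType) n (W : finType) (G : basis F n W -> C) :
  \sum_b G b = \sum_x \sum_y \sum_w G (x, y, w).
Proof. by rewrite pair_bigA pair_bigA; apply: eq_bigr => -[[]]. Qed.

Lemma sqnorm_ket (B : finType) (b0 : B) : sqnorm (ket b0) = 1.
Proof.
rewrite /sqnorm (eq_bigr (fun b => (b == b0)%:R * 1)) ?sum_delta // => b _.
by rewrite /ket; case: eqP; rewrite ?normr1 ?normr0 ?expr1n ?expr0n ?mulr1 ?mulr0.
Qed.

Lemma sqnorm_op_app (B : finType) (U : op B) (v : qstate B) :
  unitary U -> sqnorm (op_app U v) = sqnorm v.
Proof.
move=> hU; rewrite /sqnorm /op_app.
have expand b : `|\sum_b' U b b' * v b'| ^+ 2 =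
    \sum_b' \sum_b'' (U b b')^* * U b b'' * ((v b')^* * v b'').
  rewrite normCKC rmorph_sum mulr_suml; apply: eq_bigr => b' _.
  by rewrite mulr_sumr; apply: eq_bigr => b'' _; rewrite rmorphM; ring.
rewrite (eq_bigr _ (fun b _ => expand b)) exchange_big.
apply: eq_bigr => b' _; rewrite exchange_big.
rewrite (eq_bigr (fun b'' => (b'' == b')%:R * ((v b')^* * v b''))) => [|b'' _].
  by rewrite sum_delta normCKC.
by rewrite -mulr_suml hU eq_sym.
Qed.

Lemma sqnorm_oracle (F : finFieldType) n (W : finType)
  (f : {ffun 'I_n -> F} -> F) (v : qstate (basis F n W)) :
  sqnorm (oracle f v) = sqnorm v.
Proof.
rewrite /sqnorm !sum_basis; apply: eq_bigr => x _.
by rewrite (reindex_inj (addIr (f x))); apply: eq_bigr => y _; rewrite /oracle addrK.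
Qed.

Lemma sqnorm_run (F : finFieldType) n (W : finType) (T : nat)
  (U : nat -> op (basis F n W)) (b0 : basis F n W) f :
  (forall k, (k <= T)%N -> unitary (U k)) ->
  sqnorm (run U (ket b0) f T) = 1.
Proof.
move=> hU; suff : forall k, (k <= T)%N -> sqnorm (run U (ket b0) f k) = 1 by apply.
elim=> [|k IHk] hk /=; first by rewrite sqnorm_op_app ?sqnorm_ket //; apply: hU.
by rewrite sqnorm_op_app ?sqnorm_oracle ?IHk ?(ltnW hk) //; apply: hU.
Qed.

Lemma spanned_op_app (B J : finType) (c : J -> qstate B) (U : op B) v :
  spanned_by c v -> spanned_by (fun j => op_app U (c j)) (op_app U v).
Proof.
move=> [lam v_lam]; exists lam => b; rewrite /op_app.
under eq_bigr do rewrite v_lam mulr_sumr.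
rewrite exchange_big; apply: eq_bigr => j _; rewrite mulr_sumr.
by apply: eq_bigr => b' _; rewrite mulrCA.
Qed.

Definition query_point (F : finFieldType) n : finType :=
  ({ffun 'I_n -> F} * F)%type.

Definition answer_branch (F : finFieldType) n (W : finType) (p : query_point F n)
  (u : qstate (basis F n W)) : qstate (basis F n W) :=
  fun b => let: (x, y, w) := b in (p.1 == x)%:R * u (x, y - p.2, w).

(* [oracle f v = \sum_p [f p.1 == p.2] answer_branch p v]. *)
Lemma spanned_oracle (F : finFieldType) n (W J : finType)
  (c : J -> qstate (basis F n W)) f v :
  spanned_by c v ->
  spanned_by (fun pj : query_point F n * J => answer_branch pj.1 (c pj.2)) (oracle f v).
Proof.
move=> [lam v_lam]; exists (fun pj => (pj.1.2 == f pj.1.1)%:R * lam pj.2).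
move=> [[x y] w]; rewrite /oracle v_lam.
rewrite -(pair_bigA _ (fun (p : query_point F n) j =>
  (p.2 == f p.1)%:R * lam j * answer_branch p (c j) (x, y, w))) exchange_big.
apply: eq_bigr => j _ /=.
rewrite -(pair_bigA _ (fun x' z =>
  (z == f x')%:R * lam j * answer_branch (x', z) (c j) (x, y, w))) /=.
transitivity
  (\sum_x' (x' == x)%:R * \sum_z (z == f x')%:R * (lam j * c j (x, y - z, w))).
  by rewrite sum_delta sum_delta.
apply: eq_bigr => x' _; rewrite mulr_sumr; apply: eq_bigr => z _.
by rewrite /= mulrCA (mulrCA (x' == x)%:R) mulrA.
Qed.

Lemma run_spanned (F : finFieldType) n (W : finType) (U : nat -> op (basis F n W))
  (v0 : qstate (basis F n W)) (k : nat) :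
  exists (J : finType) (c : J -> qstate (basis F n W)),
    #|J| = (#|F| ^ (n.+1 * k))%N /\ forall f, spanned_by c (run U v0 f k).
Proof.
elim: k => [|k [J [c [cardJ c_span]]]].
  exists unit, (fun _ => op_app (U 0%N) v0).
  split => [|f]; first by rewrite card_unit muln0.
  apply: spanned_op_app; exists (fun _ => 1) => b.
  by rewrite (big_pred1 tt) ?mul1r // => -[].
exists (query_point F n * J)%type,
  (fun pj => op_app (U k.+1) (answer_branch pj.1 (c pj.2))).
split => [|f]; last exact/spanned_op_app/spanned_oracle.
rewrite card_prod cardJ /query_point card_prod card_ffun card_ord.
by rewrite -expnSr -expnD mulnS.
Qed.

Lemma expn_le_ffact d n : (2 * d <= n)%N -> (n ^ d <= 2 ^ d * n ^_ d)%N.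
Proof.
elim: d => [|d IHd] hdn; first by rewrite ffactn0.
rewrite expnSr ffactnSr expnSr mulnACA.
by apply: leq_mul; [apply: IHd; lia | lia].
Qed.

Lemma leq_of_expn_le_3half q m k : (1 < q)%N ->
  (2 * q ^ m <= 3 * q ^ k)%N -> (m <= k)%N.
Proof.
move=> q_gt1 hmk; rewrite leqNgt; apply/negP => /(leq_pexp2l (ltnW q_gt1)).
rewrite expnS => hkm.
have : (2 * (q * q ^ k) <= 3 * q ^ k)%N by apply: leq_trans hmk; rewrite leq_mul2l.
have : (0 < q ^ k)%N by rewrite expn_gt0; lia.
nia.
Qed.

Lemma card_small_subsets n d :
  ('C(n, d) <= #|[set S : {set 'I_n} | #|S| <= d]|)%N.
Proof.
rewrite -{1}(card_ord n) -card_draws; apply: subset_leq_card.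
by apply/subsetP => S; rewrite !inE => /eqP ->.
Qed.

Lemma expn_pred_le_of_bin_le n d T : (0 < d)%N -> (2 * d <= n)%N ->
  ('C(n, d) <= n.+1 * T)%N -> (n ^ (d - 1) <= 2 ^ d.+1 * d`! * T)%N.
Proof.
move=> d_gt0 hdn hC.
have n_gt0 : (0 < n)%N by lia.
rewrite -(leq_pmul2r n_gt0) -expnSr subn1 prednK //.
apply: (leq_trans (expn_le_ffact hdn)); rewrite -bin_ffact.
have hC' : ('C(n, d) * d`! <= n.+1 * T * d`!)%N by rewrite leq_mul2r hC orbT.
apply: (@leq_trans (2 ^ d * (n.+1 * T * d`!))); first by rewrite leq_mul2l hC' orbT.
have hn : (n.+1 <= 2 * n)%N by lia.
apply: (@leq_trans (2 ^ d * (2 * n * T * d`!))).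
  by rewrite leq_mul2l !leq_mul2r hn !orbT.
by apply: eq_leq; rewrite expnS; ring.
Qed.

Lemma sum_success_prob_le (B J A : finType) (c : J -> qstate B) (out : B -> A)
  (psi : A -> qstate B) (P : {pred A}) :
  (forall a, sqnorm (psi a) = 1) -> (forall a, spanned_by c (psi a)) ->
  \sum_(a in P) success_prob out a (psi a) <= #|J|%:R.
Proof.
move=> psi_unit psi_span.
have [s [s_ge0 sum_s] s_bound] := span_mass_bound c.
apply: le_trans sum_s; rewrite (partition_big out predT) //=.
rewrite [leRHS](bigID (mem P)) /= -[leLHS]addr0 lerD //.
  apply: ler_sum => a _; apply: ler_sum => b _.
  by have := s_bound _ (psi_span a) b; rewrite psi_unit mul1r.
by apply: sumr_ge0 => a _; apply: sumr_ge0.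
Qed.

Lemma deg_le_pffun_on (F : finFieldType) n (d : nat) (a : coeffs F n) :
  a \in pffun_on 0 [set S : {set 'I_n} | (#|S| <= d)%N] [set: F] -> deg_le d a.
Proof.
move=> /pffun_onP[a_supp _] S hS; apply/eqP; apply: contraTT hS => aS.
by have := subsetP a_supp S aS; rewrite inE -leqNgt.
Qed.

Unset Implicit Arguments.

Theorem proposition1 (F : finFieldType) (d : nat) (hd : (1 <= d)%N) :
  exists c : Rr, 0 < c /\
  exists n0 : nat, forall n : nat, (n0 <= n)%N ->
  forall (W : finType) (T : nat) (U : nat -> op (basis F n W))
         (b0 : basis F n W) (out : basis F n W -> coeffs F n),
    (forall k : nat, (k <= T)%N -> unitary (U k)) ->
    (forall a : coeffs F n, deg_le d a ->
       (2 / 3 : C) <= success_prob out a (run U (ket b0) (mlpoly_eval a) T)) ->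
    c * (n ^ (d - 1))%:R <= T%:R.
Proof.
pose K := (2 ^ d.+1 * d`!)%N.
exists (K%:R)^-1; split; first by rewrite invr_gt0 ltr0n muln_gt0 expn_gt0 fact_gt0.
exists (2 * d)%N => n hn W T U b0 out hU hsucc.
pose D := [set S : {set 'I_n} | (#|S| <= d)%N].
pose P := pffun_on (0 : F) D [set: F].
have [J [c [cardJ c_span]]] := run_spanned U (ket b0) T.
have hPJ : #|P|%:R * (2 / 3) <= (#|J|%:R : C).
  apply: le_trans (sum_success_prob_le out P (fun a => sqnorm_run b0 _ hU)
    (fun a => c_span (mlpoly_eval a))).
  rewrite mulrC mulr_natr -sumr_const; apply: ler_sum => a aP.
  exact/hsucc/deg_le_pffun_on.
have hD : (#|D| <= n.+1 * T)%N.
  apply: (@leq_of_expn_le_3half #|F|); first exact: card_finNzRing_gt1.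
  have cardP : #|P| = (#|F| ^ #|D|)%N by rewrite card_pffun_on cardsT.
  rewrite -cardJ -cardP -(ler_nat C) !natrM.
  have -> : (2%:R : C) * #|P|%:R = 3%:R * (#|P|%:R * (2 / 3)) by field.
  by rewrite ler_pM2l ?ltr0n.
rewrite ler_pdivrMl ?ltr0n ?muln_gt0 ?expn_gt0 ?fact_gt0 // -natrM ler_nat.
exact: expn_pred_le_of_bin_le hd hn (leq_trans (card_small_subsets n d) hD).
Qed.
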